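(* Let $\underline{A}=(A_1,\dots,A_k)$ be a locally constant cocycle over a Bernoulli shift on $\{1,\dots,k\}^{\mathbb Z}$ with $\mathrm{rank}(A_i)=1$ for all $i$. Then either $d(\mathscr{K}(\underline{A}),\mathscr{R}(\underline{A}))>0$ and $\underline{A}$ is projectively uniformly hyperbolic, or $d(\mathscr{K}(\underline{A}),\mathscr{R}(\underline{A}))=0$, $\underline{A}$ admits a null word, and $L_1(\underline{A})=-\infty$.
   Context: Base: $X=\{1,\dots,k\}^{\mathbb Z}$ with Bernoulli measure $p^{\mathbb Z}$ ($p_i>0$), $\sigma$ the shift; cocycle $F(\omega,v)=(\sigma\omega,A_{\omega_1}v)$, $A^n(\omega)=A_{\omega_n}\cdots A_{\omega_1}$, $L_1=\lim_n\frac1n\log\|A^n(\omega)\|\in[-\infty,\infty)$ a.e. $\mathscr{K}(\underline A)=\{\mathrm{Ker}A_i\}_i$ and $\mathscr{R}(\underline A)=\{\mathrm{Range}A_i\}_i$, finite subsets of the projective line $\mathbb{P}^1$, and $d$ is the distance between these sets for a standard metric on $\mathbb{P}^1$. A null word is a finite word $\omega_1\dots\omega_n$ with $A_{\omega_n}\cdots A_{\omega_1}=0$. Projectively uniformly hyperbolic: continuous invariant line fields $E_0,E_1$ with $\mathbb R^2=E_0(\omega)\oplus E_1(\omega)$ and $n$ with $\|A^n(\omega)|_{E_0}\|<\|A^n(\omega)|_{E_1}\|$ for all $\omega$. *)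

From HB Require Import structures.
From mathcomp Require Import all_boot all_order all_algebra.
From mathcomp Require Import all_classical all_reals all_analysis.
Set Implicit Arguments. Unset Strict Implicit. Unset Printing Implicit Defensive.
Import Order.TTheory GRing.Theory Num.Theory.
Local Open Scope ring_scope.
Local Open Scope classical_set_scope.

(* Base space X = {1,...,k}^Z with k = n.+1; symbols are 'I_n.+1 (0-based). *)
Definition seqspace (n : nat) := int -> 'I_n.+1.
HB.instance Definition _ (n : nat) := Choice.on (seqspace n).
HB.instance Definition _ (n : nat) :=
  isPointed.Build (seqspace n) (fun _ => ord0).

Definition shift (n : nat) (w : seqspace n) : seqspace n := fun i => w (i + 1)%R.

Fixpoint cocycle (R : realType) (n : nat) (A : 'I_n.+1 -> 'M[R]_2)
  (w : seqspace n) (m : nat) : 'M[R]_2 :=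
  match m with
  | O => 1%:M
  | S m' => A (w (Posz m'.+1)) *m cocycle A w m'
  end.

(* product A_{a_m} ... A_{a_1} along a finite word [a_1; ...; a_m] *)
Definition wordprod (R : realType) (n : nat) (A : 'I_n.+1 -> 'M[R]_2)
  (s : seq 'I_n.+1) : 'M[R]_2 := foldl (fun M i => A i *m M) 1%:M s.

Definition null_word (R : realType) (n : nat) (A : 'I_n.+1 -> 'M[R]_2) :=
  exists s : seq 'I_n.+1, wordprod A s = 0.

Definition enorm (R : realType) (v : 'cV[R]_2) : R := Num.sqrt (\sum_i v i 0 ^+ 2).
Definition opnorm (R : realType) (M : 'M[R]_2) : R :=
  sup [set enorm (M *m v) | v in [set v : 'cV[R]_2 | enorm v = 1]].

(* standard metric on P^1: sine of the angle between the lines spanned by u, v *)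
Definition pdist (R : realType) (u v : 'cV[R]_2) : R :=
  `|u 0 0 * v 1 0 - u 1 0 * v 0 0| / (enorm u * enorm v).

Definition dist_ker_range (R : realType) (n : nat) (A : 'I_n.+1 -> 'M[R]_2) : R :=
  inf [set pdist u v | u in [set u : 'cV[R]_2 | u != 0 /\ exists i, A i *m u = 0]
                     & v in [set v : 'cV[R]_2 | v != 0 /\ exists j x, v = A j *m x]].

(* a line field X -> P^1 is given by a nowhere vanishing spanning vector field *)
Definition line_field_continuous (R : realType) (n : nat) (e : seqspace n -> 'cV[R]_2) :=
  forall w (eps : R), 0 < eps -> exists N : nat, forall w' : seqspace n,
    (forall i : int, (`|i| <= N)%N -> w' i = w i) -> pdist (e w) (e w') < eps.

Definition line_field_invariant (R : realType) (n : nat) (A : 'I_n.+1 -> 'M[R]_2)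
  (e : seqspace n -> 'cV[R]_2) :=
  forall w, exists c : R, A (w 1%R) *m e w = c *: e (shift w).

Definition line_norm (R : realType) (M : 'M[R]_2) (v : 'cV[R]_2) : R :=
  enorm (M *m v) / enorm v.

Definition proj_unif_hyperbolic (R : realType) (n : nat) (A : 'I_n.+1 -> 'M[R]_2) :=
  exists e0 e1 : seqspace n -> 'cV[R]_2,
    [/\ forall w, e0 w != 0 /\ e1 w != 0,
        line_field_continuous e0 /\ line_field_continuous e1,
        line_field_invariant A e0 /\ line_field_invariant A e1,
        (* R^2 = E0(w) (+) E1(w) *)
        forall w, \det (row_mx (e0 w) (e1 w)) != 0 &
        exists m : nat, forall w,
          line_norm (cocycle A w m) (e0 w) < line_norm (cocycle A w m) (e1 w)].

Definition cylinder (n : nat) (m : int) (s : seq 'I_n.+1) : set (seqspace n) :=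
  [set w | forall j : nat, (j < size s)%N -> w (m + Posz j)%R = nth ord0 s j].

Definition cylinders (n : nat) : set (set (seqspace n)) :=
  [set C | exists m s, C = cylinder m s].

(* X with the product sigma-algebra (generated by cylinders) *)
Definition Xmeas (n : nat) := g_sigma_algebraType (@cylinders n).

Definition bernoulli_measure (R : realType) (n : nat) (p : 'I_n.+1 -> R)
  (P : probability (Xmeas n) R) :=
  forall (m : int) (s : seq 'I_n.+1),
    P (cylinder m s) = (\prod_(i <- s) p i)%:E.

Definition elog (R : realType) (x : R) : \bar R :=
  if 0 < x then (ln x)%:E else -oo%E.

Definition lyap_seq (R : realType) (n : nat) (A : 'I_n.+1 -> 'M[R]_2)
  (w : seqspace n) (m : nat) : \bar R :=
  ((m%:R)^-1)%:E * elog (opnorm (cocycle A w m)).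

From Pilot Require Import Defs.
From HB Require Import structures.
From mathcomp Require Import all_boot all_order all_algebra.
From mathcomp Require Import all_classical all_reals all_analysis.
From mathcomp Require Import ring lra.
Import Order.TTheory GRing.Theory Num.Theory.
Local Open Scope ring_scope.
Local Open Scope classical_set_scope.

(** Write each rank-one [A_i] as [r_i rho_i], a column spanning [Range A_i]
    times a row covector whose kernel is [Ker A_i].  If every pairing
    [rho_k r_l] is nonzero, kernels and ranges stay a positive distance apart,
    and the locally constant line fields [E0(w) = Ker A_(w_1)],
    [E1(w) = Range A_(w_0)] are invariant and transverse, with [E0] killed in one
    step: the cocycle is projectively uniformly hyperbolic.  If [rho_a r_b = 0],
    then [r_b] lies in [Ker A_a] and in [Range A_b], so the distance is zero and
    [A_a A_b = 0] is a null word.  Almost every Bernoulli sequence contains any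
    given word (it is missed in [T] disjoint blocks with probability
    [(1 - p(s))^T]), and after an occurrence of a null word the cocycle vanishes,
    so [L_1 = -oo] almost surely. *)

Section RankOne.
Context {F : fieldType}.

Lemma rank1_factor {m n} (M : 'M[F]_(m, n)) : \rank M = 1%N ->
  exists (r : 'cV[F]_m) (rho : 'rV[F]_n), [/\ r != 0, rho != 0 & M = r *m rho].
Proof.
move=> rkM; have M_neq0 : M != 0 by rewrite -mxrank_eq0 rkM.
have := mulmx_base M; move: (col_base M) (row_base M); rewrite rkM => r rho defM.
by exists r, rho; split=> //; apply: contraNneq M_neq0 => x0; rewrite -defM x0 ?mul0mx ?mulmx0.
Qed.

Lemma mul_rank1_mx {m n} (r : 'cV[F]_m) (rho : 'rV[F]_n) (u : 'cV[F]_n) :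
  r *m rho *m u = (rho *m u) 0 0 *: r.
Proof. by rewrite -mulmxA {1}(mx11_scalar (rho *m u)) mul_mx_scalar. Qed.

Lemma rank1_range {m n} (r : 'cV[F]_m) (rho : 'rV[F]_n) :
  rho != 0 -> exists x, r *m rho *m x = r.
Proof.
move=> rho_neq0; have /existsP[j rhoj] : [exists j, rho 0 j != 0].
  apply: contraNT rho_neq0 => /existsPn rho0.
  by apply/eqP/matrixP => i j; rewrite (ord1 i) mxE; apply/eqP/negPn/rho0.
exists ((rho 0 j)^-1 *: delta_mx j 0).
by rewrite mul_rank1_mx -scalemxAr -colE !mxE mulVf // scale1r.
Qed.

Lemma rank1_factors {I : Type} {m n} {A : I -> 'M[F]_(m, n)} :
  (forall i, \rank (A i) = 1%N) ->
  exists (r : I -> 'cV[F]_m) (rho : I -> 'rV[F]_n),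
    [/\ forall i, r i != 0, forall i, rho i != 0 & forall i, A i = r i *m rho i].
Proof.
move=> rkA; have /choice[f f_spec] : forall i, exists x : 'cV[F]_m * 'rV[F]_n,
    [/\ x.1 != 0, x.2 != 0 & A i = x.1 *m x.2].
  by move=> i; have [r [rho [? ? ?]]] := rank1_factor (A i) (rkA i); exists (r, rho).
by exists (fun i => (f i).1), (fun i => (f i).2); split=> i; case: (f_spec i).
Qed.

End RankOne.

Section Plane.
Context {R : realType}.
Implicit Types (u v : 'cV[R]_2) (rho : 'rV[R]_2) (M : 'M[R]_2).

Let lift0_ord2 : lift 0 0 = 1 :> 'I_2. Proof. exact: val_inj. Qed.
Let lift1_ord2 : lift 1 0 = 0 :> 'I_2. Proof. exact: val_inj. Qed.

Lemma cV2P u v : u 0 0 = v 0 0 -> u 1 0 = v 1 0 -> u = v.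
Proof.
move=> e0 e1; apply/matrixP => i j; rewrite (ord1 j).
case: i => [[|[|//]] i2]; [rewrite (_ : Ordinal i2 = 0) | rewrite (_ : Ordinal i2 = 1)];
  by [|apply: val_inj].
Qed.

Lemma mul_rV2_cV2 rho u : (rho *m u) 0 0 = rho 0 0 * u 0 0 + rho 0 1 * u 1 0.
Proof. by rewrite mxE !big_ord_recl big_ord0 addr0 lift0_ord2. Qed.

Lemma det_mx2 M : \det M = M 0 0 * M 1 1 - M 0 1 * M 1 0.
Proof.
rewrite (expand_det_row _ 0) !big_ord_recl big_ord0 addr0 /cofactor !det_mx11 !mxE /=.
by rewrite lift0_ord2 lift1_ord2 expr0 expr1 mul1r mulN1r mulrN.
Qed.

Lemma enorm2E u : enorm u = Num.sqrt (u 0 0 ^+ 2 + u 1 0 ^+ 2).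
Proof. by rewrite /enorm !big_ord_recl big_ord0 addr0 lift0_ord2. Qed.

Lemma enorm_ge0 u : 0 <= enorm u.
Proof. exact: sqrtr_ge0. Qed.

Lemma enorm_eq0 u : (enorm u == 0) = (u == 0).
Proof.
rewrite enorm2E sqrtr_eq0 le_eqVlt ltNge addr_ge0 ?sqr_ge0 // orbF.
rewrite paddr_eq0 ?sqr_ge0 // !sqrf_eq0.
apply/andP/eqP => [[/eqP u0 /eqP u1] | ->]; last by rewrite !mxE eqxx.
by apply: cV2P; rewrite mxE.
Qed.

Lemma enorm0 : enorm (0 : 'cV[R]_2) = 0.
Proof. by apply/eqP; rewrite enorm_eq0. Qed.

Lemma enorm_gt0 u : (0 < enorm u) = (u != 0).
Proof. by rewrite lt_def enorm_eq0 enorm_ge0 andbT. Qed.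

Lemma enormZ (a : R) u : enorm (a *: u) = `|a| * enorm u.
Proof.
rewrite !enorm2E !mxE -sqrtr_sqr -sqrtrM ?sqr_ge0 //; congr Num.sqrt; ring.
Qed.

Lemma pdistC u v : pdist u v = pdist v u.
Proof.
by rewrite /pdist [enorm v * _]mulrC; congr (_ / _); rewrite -normrN; congr `|_|; ring.
Qed.

Lemma pdistZl (a : R) u v : a != 0 -> pdist (a *: u) v = pdist u v.
Proof.
move=> a_neq0; rewrite /pdist enormZ !mxE -!mulrA -mulrBr normrM -mulrA.
by rewrite invfM mulrCA mulVKf ?normr_eq0.
Qed.

Lemma pdistZr (a : R) u v : a != 0 -> pdist u (a *: v) = pdist u v.
Proof. by move=> a_neq0; rewrite pdistC pdistZl // pdistC. Qed.

Lemma pdistxx u : pdist u u = 0.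
Proof. by rewrite /pdist (mulrC (u 0 0)) subrr normr0 mul0r. Qed.

Lemma pdist_ge0 u v : 0 <= pdist u v.
Proof. by rewrite divr_ge0 ?mulr_ge0 ?enorm_ge0. Qed.

Lemma opnorm0 : opnorm (0 : 'M[R]_2) = 0.
Proof.
rewrite /opnorm (_ : [set _ | _ in _] = [set 0]) ?sup1 //.
apply/seteqP; split=> [_ [v _ <-] | _ ->] /=; first by rewrite mul0mx enorm0.
exists (delta_mx 0 0); last by rewrite mul0mx enorm0.
by rewrite /= enorm2E !mxE /= expr1n expr0n addr0 sqrtr1.
Qed.

Definition perp rho : 'cV[R]_2 := \col_i [:: - rho 0 1; rho 0 0]`_i.

Lemma mul_perp rho : rho *m perp rho = 0.
Proof.
by apply/matrixP => i j; rewrite !ord1 mul_rV2_cV2 !mxE /=; ring.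
Qed.

Lemma enorm_perp rho : enorm (perp rho) = enorm rho^T.
Proof. by rewrite !enorm2E !mxE /= sqrrN addrC. Qed.

Lemma perp_eq0 rho : (perp rho == 0) = (rho == 0).
Proof. by rewrite -enorm_eq0 enorm_perp enorm_eq0 trmx_eq0. Qed.

Lemma kernel_rV2 {rho u} : rho != 0 -> (rho *m u) 0 0 = 0 -> exists t, u = t *: perp rho.
Proof.
rewrite mul_rV2_cV2 => rho_neq0 rho_u.
have := enorm_gt0 rho^T; rewrite trmx_eq0 rho_neq0 enorm2E !mxE sqrtr_gt0 => N_gt0.
have N_neq0 := lt0r_neq0 N_gt0.
exists ((rho 0 0 * u 1 0 - rho 0 1 * u 0 0) / (rho 0 0 ^+ 2 + rho 0 1 ^+ 2)).
apply: cV2P; rewrite !mxE /= mulrAC; apply: (canRL (mulfK N_neq0)).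
(* each coordinate identity holds modulo the vanishing pairing [rho_u] *)
  by rewrite -[LHS]subr0 -(mulr0 (rho 0 0)) -rho_u; ring.
by rewrite -[LHS]subr0 -(mulr0 (rho 0 1)) -rho_u; ring.
Qed.

Lemma pdist_perp rho v :
  pdist (perp rho) v = `|(rho *m v) 0 0| / (enorm (perp rho) * enorm v).
Proof. by rewrite /pdist mul_rV2_cV2 !mxE /= -normrN; congr (`|_| / _); ring. Qed.

Lemma det_row_mx_perp rho v : \det (row_mx (perp rho) v) = - (rho *m v) 0 0.
Proof.
have row0 i : row_mx (perp rho) v i (0 : 'I_2) = perp rho i 0.
  by rewrite (_ : (0 : 'I_2) = lshift 1 (0 : 'I_1)) ?row_mxEl //; apply: val_inj.
have row1 i : row_mx (perp rho) v i (1 : 'I_2) = v i 0.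
  by rewrite (_ : (1 : 'I_2) = rshift 1 (0 : 'I_1)) ?row_mxEr //; apply: val_inj.
by rewrite det_mx2 !row0 !row1 mul_rV2_cV2 !mxE /=; ring.
Qed.

End Plane.

Lemma measure_big_setU_le {d} {T : measurableType d} {R : realType}
    (mu : {measure set T -> \bar R}) {I : Type} (s : seq I) (F : I -> set T) :
  (forall i, measurable (F i)) ->
  (mu (\big[setU/set0]_(i <- s) F i) <= \sum_(i <- s) mu (F i))%E.
Proof.
move=> F_meas; elim: s => [|i s IH]; first by rewrite !big_nil measure0.
rewrite !big_cons; apply: le_trans (measureU2 _ _ _) _ => //.
  by apply: bigsetU_measurable.
by rewrite leeD2l.
Qed.

Section Words.
Context {n : nat}.
Implicit Types (s u : seq 'I_n.+1) (w : seqspace n).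

Fixpoint words (L : nat) : seq (seq 'I_n.+1) :=
  if L is L'.+1 then [seq x :: u | x <- enum 'I_n.+1, u <- words L'] else [:: [::]].

Lemma words_uniq L : uniq (words L).
Proof.
elim: L => [//|L IH] /=; rewrite allpairs_uniq ?enum_uniq //.
by move=> [x u] [y v] _ _ /= [-> ->].
Qed.

Lemma mem_words u : u \in words (size u).
Proof. by elim: u => [|x u IH] /=; rewrite ?mem_seq1 // allpairs_f ?mem_enum. Qed.

Fixpoint block_avoiding s (T : nat) : seq (seq 'I_n.+1) :=
  if T is T'.+1 then
    [seq u ++ v | u <- block_avoiding s T', v <- [seq v <- words (size s) | v != s]]
  else [:: [::]].

Section Weights.
Context {R : realType} {p : 'I_n.+1 -> R}.
Hypothesis p_sum1 : \sum_i p i = 1.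

Lemma sum_words L : \sum_(u <- words L) \prod_(x <- u) p x = 1.
Proof.
elim: L => [|L IH] /=; first by rewrite big_seq1 big_nil.
rewrite big_allpairs_dep big_enum /= -[RHS]p_sum1; apply: eq_bigr => x _.
by under eq_bigr do rewrite big_cons; rewrite -mulr_sumr IH mulr1.
Qed.

Lemma sum_words_neq s :
  \sum_(u <- words (size s) | u != s) \prod_(x <- u) p x = 1 - \prod_(x <- s) p x.
Proof.
rewrite -[X in _ = X - _](sum_words (size s)) (bigD1_seq s) ?mem_words ?words_uniq //=.
by rewrite addrC addrK.
Qed.

Lemma sum_block_avoiding s T :
  \sum_(u <- block_avoiding s T) \prod_(x <- u) p x = (1 - \prod_(x <- s) p x) ^+ T.
Proof.
elim: T => [|T IH] /=; first by rewrite big_seq1 big_nil expr0.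
rewrite big_allpairs_dep exprSr -IH mulr_suml; apply: eq_bigr => u _.
rewrite -sum_words_neq big_filter mulr_sumr; apply: eq_bigr => v _.
by rewrite big_cat.
Qed.

End Weights.

Definition word_at w (m : int) (L : nat) : seq 'I_n.+1 :=
  [seq w (m + k%:Z) | k <- iota 0 L].

Lemma size_word_at w m L : size (word_at w m L) = L.
Proof. by rewrite size_map size_iota. Qed.

Lemma cylinderE m s w : cylinder m s w <-> word_at w m (size s) = s.
Proof.
split=> [occ | e].
  apply: (@eq_from_nth _ ord0); rewrite ?size_word_at // => k ks.
  by rewrite (nth_map 0%N) ?size_iota // nth_iota // add0n occ.
rewrite -e => k; rewrite size_word_at => ks.
by rewrite (nth_map 0%N) ?size_iota // nth_iota.
Qed.

Lemma word_atD w m L1 L2 :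
  word_at w m (L1 + L2) = word_at w m L1 ++ word_at w (m + L1%:Z) L2.
Proof.
rewrite /word_at iotaD map_cat add0n; congr (_ ++ _).
rewrite -[in LHS](addn0 L1) iotaDl -map_comp; apply: eq_map => k /=.
by rewrite PoszD addrA.
Qed.

Lemma word_at_block_avoiding s w T :
  (forall t, (t < T)%N -> ~ cylinder (Posz (t * size s).+1) s w) ->
  word_at w 1 (T * size s) \in block_avoiding s T.
Proof.
elim: T => [|T IH] avoid /=; first by rewrite mem_seq1.
rewrite mulSnr word_atD; apply: allpairs_f.
  by apply: IH => t tT; apply: avoid; rewrite ltnS ltnW.
rewrite mem_filter andbC -[X in _ \in words X](size_word_at w (1 + (T * size s)%:Z)).
rewrite mem_words; apply/eqP => occ; apply: (avoid T) => //; apply/cylinderE.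
by rewrite intS.
Qed.

End Words.

Section BernoulliShift.
Context {R : realType} {n : nat} {p : 'I_n.+1 -> R} (P : probability (Xmeas n) R).
Hypotheses (p_gt0 : forall i, 0 < p i) (p_sum1 : \sum_i p i = 1).
Hypothesis P_bern : bernoulli_measure p P.

Lemma cylinder_measurable m s : measurable (cylinder m s : set (Xmeas n)).
Proof. by apply: sub_sigma_algebra; exists m, s. Qed.

Definition block_avoiding_set s : set (Xmeas n) :=
  \bigcap_t ~` cylinder (Posz (t * size s).+1) s.

Lemma block_avoiding_set_measurable s : measurable (block_avoiding_set s).
Proof.
by apply: bigcapT_measurable => t; apply: measurableC; apply: cylinder_measurable.
Qed.

Lemma measure_block_avoiding_set_le s T :
  (P (block_avoiding_set s) <= ((1 - \prod_(x <- s) p x) ^+ T)%:E)%E.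
Proof.
pose U := \big[setU/set0]_(u <- block_avoiding s T) (cylinder 1 u : set (Xmeas n)).
have sub_U : block_avoiding_set s `<=` U.
  move=> w avoid; rewrite /U -bigcup_seq; exists (word_at w 1 (T * size s)).
    by apply: word_at_block_avoiding => t _; apply: avoid.
  by apply/cylinderE; rewrite size_word_at.
have U_meas : measurable U.
  by apply: bigsetU_measurable => u _; apply: cylinder_measurable.
apply: le_trans (le_measure _ _ _ sub_U) _; rewrite ?inE //.
  exact: block_avoiding_set_measurable.
rewrite /U; apply: le_trans (measure_big_setU_le P _ _ (cylinder_measurable 1)) _.
rewrite (eq_bigr (fun u => (\prod_(x <- u) p x)%:E)) => [|u _]; last exact: P_bern.
by rewrite sumEFin sum_block_avoiding.
Qed.

Lemma measure_block_avoiding_set s : P (block_avoiding_set s) = 0%E.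
Proof.
set q := \prod_(x <- s) p x.
have q_gt0 : 0 < q by apply: prodr_gt0 => i _.
have q_le1 : q <= 1.
  apply: prodr_ile1 => i _; rewrite ltW //= -p_sum1 (bigD1 i) //= lerDl.
  by apply: sumr_ge0 => j _; apply: ltW.
have P_ge0 : (0 <= P (block_avoiding_set s))%E by apply: measure_ge0.
have P_fin : P (block_avoiding_set s) \is a fin_num.
  rewrite ge0_fin_numE // (le_lt_trans (probability_le1 _ _)) ?ltey //.
  exact: block_avoiding_set_measurable.
rewrite -(fineK P_fin); congr (_%:E); apply/le_anti; rewrite fine_ge0 // andbT.
have geom : (1 - q) ^+ T @[T --> \oo] --> 0 by apply: cvg_expr; rewrite ger0_norm; lra.
apply: (cvgr_to_ge geom); apply: nearW => T.
by rewrite -lee_fin fineK //; apply: measure_block_avoiding_set_le.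
Qed.

Lemma ae_word_occurs s : {ae P, forall w, exists m : nat, cylinder (Posz m.+1) s w}.
Proof.
exists (block_avoiding_set s); split.
- exact: block_avoiding_set_measurable.
- exact: measure_block_avoiding_set.
by move=> w /= no_occ t _ occ; apply: no_occ; exists (t * size s)%N.
Qed.

End BernoulliShift.

Section NullWords.
Context {R : realType} {n : nat} {A : 'I_n.+1 -> 'M[R]_2}.

Lemma wordprod_rcons s x : wordprod A (rcons s x) = A x *m wordprod A s.
Proof. by rewrite /wordprod -cats1 foldl_cat. Qed.

Lemma cocycleD w m L :
  cocycle A w (m + L) = wordprod A (word_at w (Posz m.+1) L) *m cocycle A w m.
Proof.
elim: L => [|L IH]; first by rewrite addn0 /wordprod /= mul1mx.
rewrite addnS /= IH mulmxA -[L.+1]addn1 word_atD cats1 wordprod_rcons /= addr0.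
by rewrite -PoszD addSn.
Qed.

Lemma cocycle_eq0_after_null_word {s w m} :
  wordprod A s = 0 -> cylinder (Posz m.+1) s w ->
  forall k, (m + size s <= k)%N -> cocycle A w k = 0.
Proof.
move=> s0 /cylinderE occ k /subnKC <-; elim: (k - _)%N => [|j IH].
  by rewrite addn0 cocycleD occ s0 mul0mx.
by rewrite addnS /= IH mulmx0.
Qed.

Lemma lyap_seq_cvgNy {w N} :
  (forall k, (N <= k)%N -> cocycle A w k = 0) -> lyap_seq A w k @[k --> \oo] --> -oo%E.
Proof.
move=> vanish; apply: cvg_near_cst; exists N.+1 => // k N_lt_k.
have k_gt0 : (0 < k)%N := leq_ltn_trans (leq0n N) N_lt_k.
rewrite /lyap_seq vanish; last exact: ltnW.
by rewrite opnorm0 /elog ltxx mulrNy gtr0_sg ?mul1e // invr_gt0 ltr0n.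
Qed.

Lemma null_word_lyap_ae {p : 'I_n.+1 -> R} {P : probability (Xmeas n) R} :
  (forall i, 0 < p i) -> \sum_i p i = 1 -> bernoulli_measure p P -> null_word A ->
  {ae P, forall w : Xmeas n, lyap_seq A w m @[m --> \oo] --> -oo%E}.
Proof.
move=> p_gt0 p_sum1 P_bern [s s0].
have [N [N_meas PN0 sub]] := ae_word_occurs P p_gt0 p_sum1 P_bern s.
exists N; split=> // w /= no_cvg; apply: sub => -[m occ]; apply: no_cvg.
exact: lyap_seq_cvgNy (cocycle_eq0_after_null_word s0 occ).
Qed.

End NullWords.

Section RankOneCocycle.
Context {R : realType} {n : nat} {A : 'I_n.+1 -> 'M[R]_2}.
Context {r : 'I_n.+1 -> 'cV[R]_2} {rho : 'I_n.+1 -> 'rV[R]_2}.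
Hypotheses (r_neq0 : forall i, r i != 0) (rho_neq0 : forall i, rho i != 0).
Hypothesis A_rank1 : forall i, A i = r i *m rho i.

Lemma mulA_rank1 i u : A i *m u = (rho i *m u) 0 0 *: r i.
Proof. by rewrite A_rank1 mul_rank1_mx. Qed.

Lemma mulA_perp i : A i *m perp (rho i) = 0.
Proof. by rewrite mulA_rank1 mul_perp mxE scale0r. Qed.

Lemma r_in_range i : exists x, r i = A i *m x.
Proof.
by have [x rx] := rank1_range (r i) (rho i) (rho_neq0 i); exists x; rewrite A_rank1 rx.
Qed.

Lemma pdist_ker_range {k l} {u v x : 'cV[R]_2} :
  u != 0 -> A k *m u = 0 -> v != 0 -> v = A l *m x ->
  pdist u v = pdist (perp (rho k)) (r l).
Proof.
rewrite !mulA_rank1 => u_neq0 /eqP; rewrite scaler_eq0 (negbTE (r_neq0 k)) orbF.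
move=> /eqP ku v_neq0 vx; subst v; have [t ut] := kernel_rV2 (rho_neq0 k) ku; subst u.
rewrite pdistZl ?pdistZr //.
  by apply: contraNneq v_neq0 => ->; rewrite scale0r.
by apply: contraNneq u_neq0 => ->; rewrite scale0r.
Qed.

Lemma dist_ker_range_gt0 : (forall k l, (rho k *m r l) 0 0 != 0) -> 0 < dist_ker_range A.
Proof.
move=> nondeg; pose c kl := pdist (perp (rho kl.1)) (r kl.2).
have c_gt0 kl : 0 < c kl.
  by rewrite /c pdist_perp divr_gt0 ?normr_gt0 ?mulr_gt0 ?enorm_gt0 ?perp_eq0.
have [kl _ c_min] := arg_minP c (i0 := (ord0, ord0)) (P := predT) isT.
apply: (lt_le_trans (c_gt0 kl)); apply: lb_le_inf.
  have [x rx] := r_in_range ord0.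
  exists (c (ord0, ord0)), (perp (rho ord0)).
    by split; [rewrite perp_eq0 | exists ord0; apply: mulA_perp].
  by exists (r ord0) => //; split=> //; exists ord0, x.
move=> _ [u [u_neq0 [k ku]] [v [v_neq0 [l [x vx]]] <-]].
by rewrite (pdist_ker_range u_neq0 ku v_neq0 vx); apply: (c_min (k, l)).
Qed.

Lemma dist_ker_range_eq0 {a b} : (rho a *m r b) 0 0 = 0 -> dist_ker_range A = 0.
Proof.
move=> ab0; rewrite /dist_ker_range; set S := (X in inf X).
have S0 : S 0.
  have [x rx] := r_in_range b; rewrite -(pdistxx (r b)).
  exists (r b); first by split=> //; exists a; rewrite mulA_rank1 ab0 scale0r.
  by exists (r b) => //; split=> //; exists b, x.
have S_lb : lbound S 0 by move=> _ [u _ [v _ <-]]; apply: pdist_ge0.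
apply/le_anti/andP; split; first by apply: ge_inf S0; exists 0.
by apply: lb_le_inf => //; exists 0.
Qed.

Lemma mulA_rank1_eq0 {a b} : (rho a *m r b) 0 0 = 0 -> A a *m A b = 0.
Proof. by move=> ab0; rewrite [A b]A_rank1 mulmxA mulA_rank1 ab0 scale0r mul0mx. Qed.

Lemma proj_unif_hyperbolic_rank1 :
  (forall k l, (rho k *m r l) 0 0 != 0) -> proj_unif_hyperbolic A.
Proof.
move=> nondeg; exists (fun w => perp (rho (w 1))), (fun w => r (w 0)); split.
- by move=> w; rewrite perp_eq0 rho_neq0 r_neq0.
- by split=> w eps eps_gt0; exists 1%N => w' agree; rewrite !agree // pdistxx.
- split=> w; first by exists 0; rewrite mulA_perp scale0r.
  by exists ((rho (w 1) *m r (w 0)) 0 0); rewrite mulA_rank1 /Defs.shift add0r.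
- by move=> w; rewrite det_row_mx_perp oppr_eq0.
exists 1%N => w; rewrite /line_norm /= mulmx1; change (w (Posz 1)) with (w 1).
rewrite mulA_perp enorm0 mul0r mulA_rank1.
by rewrite divr_gt0 ?enorm_gt0 // scaler_eq0 negb_or nondeg r_neq0.
Qed.

End RankOneCocycle.

Theorem theorem4p17 (R : realType) (n : nat) (p : 'I_n.+1 -> R)
  (P : probability (Xmeas n) R) (A : 'I_n.+1 -> 'M[R]_2) :
  (forall i, 0 < p i) -> \sum_i p i = 1 ->
  bernoulli_measure p P ->
  (forall i, \rank (A i) = 1%N) ->
  (0 < dist_ker_range A /\ proj_unif_hyperbolic A) \/
  [/\ dist_ker_range A = 0, null_word A &
      {ae P, forall w : Xmeas n, lyap_seq A w m @[m --> \oo] --> -oo%E}].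
Proof.
move=> p_gt0 p_sum1 P_bern A_rank.
have [r [rho [r_neq0 rho_neq0 A_rank1]]] := rank1_factors A_rank.
have [[a [b ab0]] | nondeg] := pselect (exists a b, (rho a *m r b) 0 0 = 0).
  have null : null_word A.
    by exists [:: b; a]; rewrite /wordprod /= mulmx1 (mulA_rank1_eq0 A_rank1 ab0).
  right; split=> //; first exact: (dist_ker_range_eq0 r_neq0 rho_neq0 A_rank1 ab0).
  exact: null_word_lyap_ae p_gt0 p_sum1 P_bern null.
have {}nondeg k l : (rho k *m r l) 0 0 != 0.
  by apply/eqP => kl0; apply: nondeg; exists k, l.
left; split; first exact: dist_ker_range_gt0 r_neq0 rho_neq0 A_rank1 nondeg.
exact: proj_unif_hyperbolic_rank1 r_neq0 rho_neq0 A_rank1 nondeg.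
Qed.
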